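(* Let $m,K$ be positive integers and $b_1,\dots,b_{3m}$ positive integers with $K/4<b_i<K/2$ and $\sum_i b_i=mK$. Set $W=100(5m)^2K$, $a_i=b_i+W$, $L=3W+K$, $\epsilon=1/(400(5m)^2)$, $h=\lfloor 4\epsilon L\rfloor$, $H=L+h$, $\beta_0=h/H$, $\beta_i=a_i/H-1/3$ ($1\le i\le 3m$). Let $X$ be the multiset consisting of $a_1,\dots,a_{3m}$, $m$ copies of $-H$ and $m$ copies of $h$, and let $T_{\min}$ be a minimum-cost addition tree over $X$. If $z$ is an internal node of $T_{\min}$ with $z<0$, then $z$ is of the form $\lambda H$ or $(-1/3+\lambda)H$.
   Context: An addition tree over a multiset $X$ is a full binary tree whose leaves are labeled by the elements of $X$ (each used once), each internal node having value equal to the sum of its children's values; its cost is the sum of the absolute values of its internal nodes, and $T_{\min}$ minimizes the cost. Nodes are identified with their values. A ''$\lambda$'' denotes a sum of at most $5m$ numbers each of the form $\pm\beta_i$ with $0\le i\le 3m$. Every node value can be written as $(N/3+\lambda)H$ with $N$ an integer; since $|\lambda|\le 1/(500m)$, $N$ and the value of $\lambda$ are uniquely determined. *)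

From HB Require Import structures.
From mathcomp Require Import all_boot all_order all_algebra.
Set Implicit Arguments.
Unset Strict Implicit.
Unset Printing Implicit Defensive.
Import Order.TTheory GRing.Theory Num.Theory.
Local Open Scope ring_scope.

Inductive atree : Type :=
| ALeaf of int
| ANode of atree & atree.

Fixpoint aval (t : atree) : int :=
  match t with ALeaf x => x | ANode l r => aval l + aval r end.

Fixpoint aleaves (t : atree) : seq int :=
  match t with ALeaf x => [:: x] | ANode l r => aleaves l ++ aleaves r end.

Fixpoint ainternals (t : atree) : seq int :=
  match t with
  | ALeaf _ => [::]
  | ANode l r => aval (ANode l r) :: (ainternals l ++ ainternals r)
  end.

Definition acost (t : atree) : int := \sum_(z <- ainternals t) `|z|.

Definition addition_tree_over (X : seq int) (t : atree) : Prop :=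
  perm_eq (aleaves t) X.

Definition min_addition_tree (X : seq int) (t : atree) : Prop :=
  addition_tree_over X t /\
  forall t', addition_tree_over X t' -> acost t <= acost t'.

(* Parameters of the construction; b is indexed 1..3m (values at other
   indices are irrelevant). *)
Definition Wp (m K : nat) : int := (100 * (5 * m) ^ 2 * K)%:Z.
Definition ap (m K : nat) (b : nat -> nat) (i : nat) : int := (b i)%:Z + Wp m K.
Definition Lp (m K : nat) : int := 3 * Wp m K + K%:Z.
Definition epsp (m : nat) : rat := 1 / (400 * (5 * m%:R) ^+ 2).
Definition hp (m K : nat) : int := Num.floor (4 * epsp m * (Lp m K)%:~R).
Definition Hp (m K : nat) : int := Lp m K + hp m K.
Definition betap (m K : nat) (b : nat -> nat) (i : nat) : rat :=
  if i == 0%N then (hp m K)%:~R / (Hp m K)%:~R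
  else (ap m K b i)%:~R / (Hp m K)%:~R - 1 / 3.

Definition Xp (m K : nat) (b : nat -> nat) : seq int :=
  [seq ap m K b i | i <- iota 1 (3 * m)] ++ nseq m (- Hp m K) ++ nseq m (hp m K).

Definition is_lambda (m K : nat) (b : nat -> nat) (l : rat) : Prop :=
  exists s : seq (bool * nat),
    [/\ (size s <= 5 * m)%N, all (fun p => (p.2 <= 3 * m)%N) s &
        l = \sum_(p <- s) (if p.1 then - betap m K b p.2 else betap m K b p.2)].

From HB Require Import structures.
From mathcomp Require Import all_boot all_order all_algebra.
From mathcomp Require Import zify ring.
Set Implicit Arguments.
Unset Strict Implicit.
Unset Printing Implicit Defensive.
Import Order.TTheory GRing.Theory Num.Theory.
Local Open Scope ring_scope.

(* Write every leaf x of X as 3x = N x * H + E x, where the class N x is 1 for the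
   a_i, -3 for -H and 0 for h, and the error satisfies |E x| <= 3h + K.  Then
   3 cost(T) and H * (sum over internal nodes v of |N v|) differ by at most
   (5m)^2 (3h + K) < H/2.  The potential [pot] turns the coarse cost into
   3m + (sum of nonnegative gaps), and m blocks (((a a) -H) a) h reach 3m, so
   every gap of a minimum tree vanishes.  In such a tree a node of class 2 is
   positive, and a node of class -2 is a pair {a_i, -H} whose sibling is a
   single a_j, which ((a_i a_j) -H) undercuts.  Hence a negative internal node
   has class 0 or -1, i.e. z = (N/3 + E/(3H)) H, and E/(3H) is the sum of the
   beta's of its nonnegative leaves. *)

Fixpoint nodesum (g : atree -> atree -> int) (t : atree) : int :=
  if t is ANode l r then g l r + nodesum g l + nodesum g r else 0.

Lemma acostE t : acost t = nodesum (fun l r => `|aval l + aval r|) t.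
Proof.
rewrite /acost; elim: t => [x|l IHl r IHr] /=; first by rewrite big_nil.
by rewrite big_cons big_cat IHl IHr addrA.
Qed.

Lemma acost_node l r : acost (ANode l r) = `|aval l + aval r| + acost l + acost r.
Proof. by rewrite !acostE. Qed.

Lemma acost_leaf x : acost (ALeaf x) = 0.
Proof. by rewrite acostE. Qed.

Lemma acost_nodeC l r : acost (ANode l r) = acost (ANode r l).
Proof. by rewrite !acost_node addrC (addrC (aval l)); lia. Qed.

Lemma aleaves_nodeC l r : perm_eq (aleaves (ANode l r)) (aleaves (ANode r l)).
Proof. by rewrite /= perm_catC. Qed.

Lemma avalE t : aval t = \sum_(x <- aleaves t) x.
Proof. by elim: t => [x|l IHl r IHr] /=; rewrite ?big_seq1 ?big_cat ?IHl ?IHr. Qed.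

Lemma perm_aval s t : perm_eq (aleaves s) (aleaves t) -> aval s = aval t.
Proof. by rewrite !avalE; apply: perm_big. Qed.

Lemma size_aleaves_gt0 t : (0 < size (aleaves t))%N.
Proof. by elim: t => [x|l IHl r IHr] //=; rewrite size_cat addn_gt0 IHl. Qed.

Fixpoint subtree (p t : atree) : Prop :=
  t = p \/ if t is ANode l r then subtree p l \/ subtree p r else False.

Lemma subtree_refl t : subtree t t.
Proof. by case: t; left. Qed.

Lemma subtree_trans p q t : subtree p q -> subtree q t -> subtree p t.
Proof.
move=> pq; elim: t => [x|l IHl r IHr] [->|] //=.
by case=> [/IHl|/IHr]; tauto.
Qed.

Lemma subtree_nodel l r t : subtree (ANode l r) t -> subtree l t.
Proof. by apply: subtree_trans; right; left; apply: subtree_refl. Qed.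

Lemma subtree_noder l r t : subtree (ANode l r) t -> subtree r t.
Proof. by apply: subtree_trans; right; right; apply: subtree_refl. Qed.

Lemma subtree_leaves p t : subtree p t -> {subset aleaves p <= aleaves t}.
Proof.
elim: t => [x|l IHl r IHr] [<-|] //= [/IHl|/IHr] sub y /sub; rewrite mem_cat => ->.
  by [].
by rewrite orbT.
Qed.

Lemma subtree_size p t : subtree p t -> (size (aleaves p) <= size (aleaves t))%N.
Proof.
elim: t => [x|l IHl r IHr] [<-|] //= [/IHl|/IHr]; rewrite size_cat; lia.
Qed.

Lemma mem_ainternals z t : z \in ainternals t ->
  exists l r, subtree (ANode l r) t /\ z = aval l + aval r.
Proof.
elim: t => [x|l IHl r IHr] //=; rewrite in_cons mem_cat.
case/or3P=> [/eqP->|/IHl|/IHr]; first by exists l, r; split=> //; left.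
  by case=> [l' [r' [sub ->]]]; exists l', r'; split=> //; right; left.
by case=> [l' [r' [sub ->]]]; exists l', r'; split=> //; right; right.
Qed.

Lemma subtree_parent v t : subtree v t ->
  t = v \/ exists w, subtree (ANode v w) t \/ subtree (ANode w v) t.
Proof.
elim: t => [x|l IHl r IHr] /=; first by case=> [<-|//]; left.
case=> [<-|sub]; first by left.
right; case: sub => [/IHl|/IHr].
- case=> [eq_v|[w [sub|sub]]].
  + by exists r; left; left; rewrite eq_v.
  + by exists w; left; right; left.
  + by exists w; right; right; left.
- case=> [eq_v|[w [sub|sub]]].
  + by exists l; right; left; rewrite eq_v.
  + by exists w; left; right; right.
  + by exists w; right; right; right.
Qed.

Lemma subtree_replace p p' t : subtree p t -> perm_eq (aleaves p') (aleaves p) ->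
  exists t', perm_eq (aleaves t') (aleaves t) /\
             acost t' - acost p' = acost t - acost p.
Proof.
move=> + pp'; elim: t => [x|l IHl r IHr] [->|sub] //; try by exists p'; rewrite !subrr.
case: sub => [/IHl|/IHr] [t' [tt' dcost]].
- exists (ANode t' r); rewrite /= perm_cat2r; split=> //.
  by rewrite !acost_node (perm_aval tt'); lia.
- exists (ANode l t'); rewrite /= perm_cat2l; split=> //.
  by rewrite !acost_node (perm_aval tt'); lia.
Qed.

Lemma min_addition_subtree X T p p' : min_addition_tree X T -> subtree p T ->
  perm_eq (aleaves p') (aleaves p) -> acost p <= acost p'.
Proof.
move=> [TX Tmin] pT pp'; have [T' [T'T dcost]] := subtree_replace pT pp'.
by have := Tmin T' (perm_trans T'T TX); lia.
Qed.

Lemma regroup_cheaper (H x y : int) v : 0 < 3 * x < H -> 0 < 3 * y < H ->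
  perm_eq (aleaves v) [:: x; - H] -> acost v = `|x - H| ->
  exists2 p, perm_eq (aleaves p) (aleaves (ANode v (ALeaf y)))
           & acost p < acost (ANode v (ALeaf y)).
Proof.
move=> x_bd y_bd v_leaves v_cost.
exists (ANode (ANode (ALeaf x) (ALeaf y)) (ALeaf (- H))).
  by apply/permP => P; have := permP v_leaves P; rewrite /= count_cat /=; lia.
have v_val : aval v = x - H by rewrite (@perm_aval v (ANode (ALeaf x) (ALeaf (- H)))).
by rewrite !acost_node !acost_leaf v_cost v_val /=; lia.
Qed.

Lemma nodesum_ge0 g t : (forall l r, 0 <= g l r) -> 0 <= nodesum g t.
Proof. by move=> g_ge0; elim: t => [//|l IHl r IHr] /=; rewrite !addr_ge0. Qed.

Lemma nodesum_ge_subtree g l r t : (forall l r, 0 <= g l r) ->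
  subtree (ANode l r) t -> g l r <= nodesum g t.
Proof.
move=> g_ge0; elim: t => [x [//|//]|l' IHl r' IHr] [[-> ->]|[/IHl|/IHr]] /=.
- by rewrite -addrA lerDl addr_ge0 ?nodesum_ge0.
- by have := g_ge0 l' r'; have := nodesum_ge0 r' g_ge0; lia.
- by have := g_ge0 l' r'; have := nodesum_ge0 l' g_ge0; lia.
Qed.

(* [pot] is chosen so that [gap u v >= 0] for all u, v and [pot] of a leaf class is
   1, 0, 0 for the classes 1, -3, 0; summed over a tree, [|N v|] telescopes (NcostE). *)
Definition pot (n : int) : int :=
  if 0 < n then (if (n %% 3)%Z == 1 then 1 else 0)
  else if n < 0 then (if (n %% 3)%Z == 0 then 0 else -1) else 0.

Definition gap (u v : int) : int := `|u + v| + pot (u + v) - pot u - pot v.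

Ltac pot_lia := rewrite /gap /pot /=; repeat (case: ifP => ?); lia.

Lemma gap_ge0 (u v : int) : 0 <= gap u v.
Proof. pot_lia. Qed.

Lemma gapC (u v : int) : gap u v = gap v u.
Proof. by rewrite /gap [v + u]addrC addrAC. Qed.

Lemma gap_eq0_sum (u v : int) : gap u v = 0 ->
  u + v = -2 \/ u + v = -1 \/ u + v = 0 \/ u + v = 2.
Proof. pot_lia. Qed.

Lemma gap_eq0_le_m2 (u v : int) : -3 <= u <= 2 -> -3 <= v <= 2 ->
  gap u v = 0 -> u + v <= -2 -> (u = 1 /\ v = -3) \/ (u = -3 /\ v = 1).
Proof. pot_lia. Qed.

Lemma gap_eq0_m2 (u : int) : -3 <= u <= 2 -> gap u (-2) = 0 -> u = 1.
Proof. pot_lia. Qed.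

Section LeafClasses.
Variable N : int -> int.

Definition Ntree t := \sum_(x <- aleaves t) N x.

Lemma Ntree_node l r : Ntree (ANode l r) = Ntree l + Ntree r.
Proof. exact: big_cat. Qed.

Lemma Ntree_leaf x : Ntree (ALeaf x) = N x.
Proof. exact: big_seq1. Qed.

Definition Ncost := nodesum (fun l r => `|Ntree l + Ntree r|).

Lemma Ncost_node l r : Ncost (ANode l r) = `|Ntree l + Ntree r| + Ncost l + Ncost r.
Proof. by []. Qed.

Lemma Ncost_leaf x : Ncost (ALeaf x) = 0.
Proof. by []. Qed.

Definition slack := nodesum (fun l r => gap (Ntree l) (Ntree r)).

Lemma slack_ge0 t : 0 <= slack t.
Proof. by apply: nodesum_ge0 => l r; apply: gap_ge0. Qed.

Lemma NcostE t : Ncost t = \sum_(x <- aleaves t) pot (N x) - pot (Ntree t) + slack t.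
Proof.
rewrite /Ncost /slack; elim: t => [x|l IHl r IHr] /=.
  by rewrite big_seq1 Ntree_leaf; lia.
by rewrite IHl IHr big_cat Ntree_node [gap _ _]/gap /=; ring.
Qed.

Definition tight t := forall l r, subtree (ANode l r) t -> gap (Ntree l) (Ntree r) = 0.

Lemma slack_eq0_tight t : slack t = 0 -> tight t.
Proof.
move=> slack0 l r sub; apply/eqP; rewrite eq_le gap_ge0 andbT -slack0.
by apply: nodesum_ge_subtree sub => ??; apply: gap_ge0.
Qed.

Lemma tight_Ntree t c : tight t -> subtree c t ->
  (exists x, c = ALeaf x) \/ (Ntree c = -2 \/ Ntree c = -1 \/ Ntree c = 0 \/ Ntree c = 2).
Proof.
case: c => [x|l r] t_tight sub; first by left; exists x.
by right; rewrite Ntree_node; apply: gap_eq0_sum; apply: t_tight.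
Qed.

Variable H : int.

Definition Eleaf x := 3 * x - N x * H.

Definition Etree t := \sum_(x <- aleaves t) Eleaf x.

Lemma Etree_node l r : Etree (ANode l r) = Etree l + Etree r.
Proof. exact: big_cat. Qed.

Lemma aval_NE t : 3 * aval t = Ntree t * H + Etree t.
Proof.
rewrite avalE /Ntree /Etree mulr_sumr mulr_suml -big_split /=.
by apply: eq_bigr => x _; rewrite /Eleaf; ring.
Qed.

Definition Ecost := nodesum (fun l r => `|Etree l + Etree r|).

Lemma acost_Ncost_dist t : 0 <= H -> `|3 * acost t - H * Ncost t| <= Ecost t.
Proof.
move=> H_ge0; elim: t => [x|l IHl r IHr].
  by rewrite acostE /Ncost /Ecost /= !mulr0 subrr normr0.
have node : `|3 * `|aval l + aval r| - H * `|Ntree l + Ntree r| | <= `|Etree l + Etree r|.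
  have -> : 3 * `|aval l + aval r| = `|(Ntree l + Ntree r) * H + (Etree l + Etree r)|.
    have -> : 3 * `|aval l + aval r| = `|3 * (aval l + aval r)| by rewrite normrM.
    by rewrite mulrDr !aval_NE; congr `|_|; ring.
  have -> : H * `|Ntree l + Ntree r| = `|(Ntree l + Ntree r) * H|.
    by rewrite normrM (ger0_norm H_ge0) mulrC.
  by apply: le_trans (ler_dist_dist _ _) _; rewrite [_ + (_ + _)]addrC addrK.
move: node IHl IHr; rewrite acost_node /Ncost /Ecost /= -/Ncost -/Ecost !mulrDr; lia.
Qed.

Variables (X : seq int) (B : int).
Hypothesis Eleaf_bound : {in X, forall x, `|Eleaf x| <= B}.

Lemma Etree_bound t : {subset aleaves t <= X} -> `|Etree t| <= (size (aleaves t))%:Z * B.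
Proof.
rewrite /Etree; elim: (aleaves t) => [|x s IH] sub_X; first by rewrite big_nil mul0r.
rewrite big_cons; apply: le_trans (ler_normD _ _) _.
rewrite /= -addn1 PoszD mulrDl mul1r addrC lerD ?IH ?Eleaf_bound ?sub_X ?mem_head //.
by move=> y s_y; rewrite sub_X // in_cons s_y orbT.
Qed.

Lemma Ecost_bound t : {subset aleaves t <= X} -> Ecost t <= (size (aleaves t))%:Z ^+ 2 * B.
Proof.
move=> sub_X; have B_ge0 : 0 <= B.
  case E: (aleaves t) (size_aleaves_gt0 t) => [//|x s] _.
  have x_X : x \in X by rewrite sub_X // E mem_head.
  exact: le_trans (normr_ge0 _) (Eleaf_bound x_X).
elim: t sub_X => [x|l IHl r IHr] sub_X; first by rewrite /Ecost /= expr1n mul1r.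
rewrite /Ecost /= -/Ecost -Etree_node.
have sub_l : {subset aleaves l <= X} by move=> y l_y; rewrite sub_X //= mem_cat l_y.
have sub_r : {subset aleaves r <= X} by move=> y r_y; rewrite sub_X //= mem_cat r_y orbT.
have := IHl sub_l; have := IHr sub_r; have := Etree_bound sub_X.
have := size_aleaves_gt0 l; have := size_aleaves_gt0 r.
rewrite /= size_cat PoszD; move: (size _) (size _) => a c a_gt0 c_gt0.
have sq : (a%:Z + c%:Z) * B <= ((a%:Z + c%:Z) ^+ 2 - a%:Z ^+ 2 - c%:Z ^+ 2) * B.
  by apply: ler_wpM2r => //; rewrite !expr2; nia.
move: sq; rewrite !mulrDl !mulNr; lia.
Qed.

End LeafClasses.

Lemma signed_sum_witness (beta : nat -> rat) n (f : int -> rat) (s : seq int) :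
  {in s, forall x, f x = 0 \/ exists2 i, (i <= n)%N & f x = beta i} ->
  exists r : seq (bool * nat), [/\ (size r <= size s)%N, all (fun p => p.2 <= n)%N r &
    \sum_(x <- s) f x = \sum_(p <- r) (if p.1 then - beta p.2 else beta p.2)].
Proof.
elim: s => [|x s IH] f_s; first by exists [::]; rewrite !big_nil.
have [|r [r_size r_idx r_sum]] := IH; first by move=> y s_y; apply: f_s; rewrite in_cons s_y orbT.
case: (f_s x (mem_head _ _)) => [fx0|[i i_le fxi]].
  by exists r; split; rewrite ?big_cons ?fx0 ?add0r ?(leqW r_size).
by exists ((false, i) :: r); split; rewrite /= ?big_cons ?fxi ?r_sum ?r_idx ?i_le.
Qed.

Lemma third_decomp (z n e H : int) : H != 0 -> 3 * z = n * H + e ->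
  z%:~R = (n%:~R / 3 + e%:~R / (3 * H%:~R)) * H%:~R :> rat.
Proof.
move=> H_neq0 val; have H_neq0' : H%:~R != 0 :> rat by rewrite intr_eq0.
transitivity ((3 * z)%:~R / 3 : rat); first by rewrite intrM; field.
by rewrite val intrD intrM; field.
Qed.

Definition Nclass (h x : int) : int := if x < 0 then -3 else if h < x then 1 else 0.

Section MinTree.
Variables (m : nat) (a : nat -> int) (h H B : int).

Definition Xseq := [seq a i | i <- iota 1 (3 * m)] ++ nseq m (- H) ++ nseq m h.

Local Notation X := Xseq.
Local Notation N := (Nclass h).

Lemma mem_Xseq x : x \in X ->
  (exists2 i, (1 <= i <= 3 * m)%N & x = a i) \/ x = - H \/ x = h.
Proof.
rewrite !mem_cat => /or3P[/mapP[i i_in ->]|/nseqP[-> _]|/nseqP[-> _]]; last 2 first.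
- by right; left.
- by right; right.
- by left; exists i => //; move: i_in; rewrite mem_iota; lia.
Qed.

Lemma size_Xseq : size X = (5 * m)%N.
Proof. by rewrite !size_cat size_map size_iota !size_nseq; lia. Qed.

Lemma sum_Xseq (f : int -> int) c : (forall i, (1 <= i <= 3 * m)%N -> f (a i) = c) ->
  \sum_(x <- X) f x = c *+ (3 * m) + f (- H) *+ m + f h *+ m.
Proof.
move=> f_a; rewrite !big_cat /= !big_nseq !iter_addr_0 big_map addrA.
rewrite (eq_big_seq (fun=> c)) ?big_const_seq ?count_predT ?size_iota ?iter_addr_0 //.
by move=> i; rewrite mem_iota => i_in; apply: f_a; lia.
Qed.

Definition block j :=
  ANode (ANode (ANode (ANode (ALeaf (a (3 * j).+1)) (ALeaf (a (3 * j).+2))) (ALeaf (- H)))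
               (ALeaf (a (3 * j).+3)))
        (ALeaf h).

Fixpoint blocks n := if n is n'.+1 then ANode (blocks n') (block n) else block 0.

Lemma blocks_leaves n : perm_eq (aleaves (blocks n))
  ([seq a i | i <- iota 1 (3 * n.+1)] ++ nseq n.+1 (- H) ++ nseq n.+1 h).
Proof.
elim: n => [|n IH]; first by apply/permP => P; rewrite /= muln0 /=; lia.
have -> : blocks n.+1 = ANode (blocks n) (block n.+1) by [].
rewrite (_ : (3 * n.+2 = 3 * n.+1 + 3)%N) ?iotaD ?map_cat ?add1n; last by lia.
apply/permP => P; have := permP IH P; rewrite !count_cat !count_nseq.
move: (count P (aleaves _)) (count P (map _ (iota 1 _))) => cL cA /=; lia.
Qed.

Hypothesis m_gt0 : (0 < m)%N.
Hypothesis a_bounds : forall i, (1 <= i <= 3 * m)%N ->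
  [/\ h < a i, 0 < 3 * a i < H & `|3 * a i - H| <= B].
Hypotheses (h_ge0 : 0 <= h) (h_le : 3 * h <= B).
Hypothesis B_small : 2 * (((5 * m) ^ 2)%N%:Z * B) < H.

Lemma B_ge0 : 0 <= B.
Proof. exact: le_trans (mulr_ge0 (ler0n _ 3) h_ge0) h_le. Qed.

Lemma H_gt0 : 0 < H.
Proof. by apply: le_lt_trans B_small; rewrite !mulr_ge0 ?B_ge0. Qed.

Lemma Nclass_a i : (1 <= i <= 3 * m)%N -> N (a i) = 1.
Proof.
case/a_bounds=> h_lt /andP[a3_gt0 _] _; rewrite pmulr_rgt0 // in a3_gt0.
by rewrite /Nclass ltNge (ltW a3_gt0) h_lt.
Qed.

Lemma Nclass_mH : N (- H) = -3.
Proof. by rewrite /Nclass oppr_lt0 H_gt0. Qed.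

Lemma Nclass_h : N h = 0.
Proof. by rewrite /Nclass ltxx ltNge h_ge0. Qed.

Lemma block_Ncost j : (j < m)%N -> Ntree N (block j) = 0 /\ Ncost N (block j) = 3.
Proof.
move=> j_lt; rewrite !Ncost_node !Ntree_node !Ncost_leaf !Ntree_leaf Nclass_mH Nclass_h.
by rewrite !Nclass_a; first split; lia.
Qed.

Lemma blocks_Ncost n : (n < m)%N ->
  Ntree N (blocks n) = 0 /\ Ncost N (blocks n) = 3 * n.+1%:Z.
Proof.
elim: n => [|n IH] n_lt /=; first by have := block_Ncost n_lt; lia.
have [N0 C0] := IH (ltnW n_lt); have [N1 C1] := block_Ncost n_lt.
by rewrite Ncost_node Ntree_node N0 N1 C0 C1; split; lia.
Qed.

Lemma Eleaf_Xseq x : x \in X -> `|Eleaf N H x| <= B.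
Proof.
rewrite /Eleaf; case/mem_Xseq => [[i i_in ->]|[->|->]].
- by rewrite Nclass_a // mul1r; case: (a_bounds i_in).
- by rewrite Nclass_mH (_ : 3 * - H - -3 * H = 0) ?normr0 ?B_ge0 //; ring.
- by rewrite Nclass_h mul0r subr0 ger0_norm ?mulr_ge0.
Qed.

Lemma Ncost_Xseq t : perm_eq (aleaves t) X -> Ncost N t = (3 * m)%:Z + slack N t.
Proof.
move=> tX; rewrite NcostE /Ntree !(perm_big _ tX) (@sum_Xseq _ 1); last first.
  by move=> i /Nclass_a ->.
rewrite (@sum_Xseq _ 1) ?Nclass_mH ?Nclass_h; last by move=> i /Nclass_a.
have -> : (3 * m)%:R + -3 *+ m + 0 *+ m = 0 :> int by lia.
by rewrite /pot /=; lia.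
Qed.

Lemma Ecost_Xseq t : perm_eq (aleaves t) X -> Ecost N H t <= ((5 * m) ^ 2)%N%:Z * B.
Proof.
move=> tX; apply: le_trans (Ecost_bound Eleaf_Xseq _) _; first by move=> x; rewrite (perm_mem tX).
by rewrite (perm_size tX) size_Xseq expr2 -PoszM expnS expn1.
Qed.

Lemma min_tree_tight T : min_addition_tree X T -> tight N T.
Proof.
move=> [TX T_min]; apply: slack_eq0_tight.
have T0X := blocks_leaves m.-1; rewrite prednK // in T0X.
have m_pred : (m.-1 < m)%N by rewrite ltn_predL.
have [_ C0] := blocks_Ncost m_pred; rewrite prednK // in C0.
have d0 := acost_Ncost_dist N (blocks m.-1) (ltW H_gt0).
have d := acost_Ncost_dist N T (ltW H_gt0).
rewrite C0 in d0; rewrite Ncost_Xseq // mulrDr in d.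
have lt1 : H * slack N T < H * 1.
  move: d0 d (Ecost_Xseq T0X) (Ecost_Xseq TX) (T_min _ T0X) B_small.
  by rewrite mulr1; lia.
by rewrite ltr_pM2l ?H_gt0 // in lt1; have := slack_ge0 N T; lia.
Qed.

Lemma Nclass_Xseq x : x \in X ->
  [/\ -3 <= N x <= 1, N x = 1 -> 0 < 3 * x < H & N x = -3 -> x = - H].
Proof.
case/mem_Xseq => [[i i_in ->]|[->|->]]; rewrite ?Nclass_a ?Nclass_mH ?Nclass_h //.
by have [_ a_bd _] := a_bounds i_in.
Qed.

Lemma tight_subtree_Xseq T c : perm_eq (aleaves T) X -> tight N T -> subtree c T ->
  [/\ -3 <= Ntree N c <= 2, Ntree N c = 1 -> exists2 x, c = ALeaf x & 0 < 3 * x < H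
    & Ntree N c = -3 -> c = ALeaf (- H)].
Proof.
move=> TX T_tight cT; case: (tight_Ntree T_tight cT) => [[x c_leaf]|]; last by split; lia.
have : x \in X by rewrite -(perm_mem TX) (subtree_leaves cT) // c_leaf mem_head.
case/Nclass_Xseq; rewrite c_leaf Ntree_leaf => N_bd N_1 N_m3.
split; first lia.
- by move/N_1; exists x.
- by move/N_m3->.
Qed.

Lemma min_tree_Ntree_neq_m2 T c : min_addition_tree X T -> subtree c T -> Ntree N c <> -2.
Proof.
move=> T_min cT Nc; have [TX _] := T_min; have T_tight := min_tree_tight T_min.
have [x [x_bd c_leaves c_cost]] : exists x,
    [/\ 0 < 3 * x < H, perm_eq (aleaves c) [:: x; - H] & acost c = `|x - H|].
  case: c cT Nc => [y _|l r cT].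
    by rewrite Ntree_leaf /Nclass; case: (y < 0); case: (h < y).
  have [lT rT] := (subtree_nodel cT, subtree_noder cT).
  have [l_bd l_1 l_m3] := tight_subtree_Xseq TX T_tight lT.
  have [r_bd r_1 r_m3] := tight_subtree_Xseq TX T_tight rT.
  rewrite Ntree_node => lr_m2; have lr_le : Ntree N l + Ntree N r <= -2 by rewrite lr_m2.
  have [[/l_1[x -> x_bd] /r_m3->]|[/l_m3-> /r_1[x -> x_bd]]] :=
    gap_eq0_le_m2 l_bd r_bd (T_tight _ _ cT) lr_le.
  - by exists x; rewrite acost_node !acost_leaf /=; split=> //; lia.
  - exists x; rewrite acost_node !acost_leaf /=; split=> //; last by lia.
    by apply/permP => P /=; lia.
have c_neq_T : T <> c.
  by move=> Tc; move: (perm_size TX); rewrite Tc (perm_size c_leaves) size_Xseq /=; lia.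
have [//|[w parent]] := subtree_parent cT.
have [wT gap_cw] : subtree w T /\ gap (Ntree N w) (Ntree N c) = 0.
  case: parent => pT.
  - by split; [exact: subtree_noder pT | rewrite gapC; exact: T_tight _ _ pT].
  - by split; [exact: subtree_nodel pT | exact: T_tight _ _ pT].
have [w_bd w_1 _] := tight_subtree_Xseq TX T_tight wT.
rewrite Nc in gap_cw; have [y w_leaf y_bd] := w_1 (gap_eq0_m2 w_bd gap_cw).
have [p p_leaves p_cost] := regroup_cheaper x_bd y_bd c_leaves c_cost.
rewrite -w_leaf in p_leaves p_cost; case: parent => pT.
- by have := min_addition_subtree T_min pT p_leaves; lia.
- have := min_addition_subtree T_min pT (perm_trans p_leaves (aleaves_nodeC _ _)).
  by rewrite acost_nodeC; lia.
Qed.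

Lemma Etree_subtree_lt T c : perm_eq (aleaves T) X -> subtree c T -> `|Etree N H c| < H.
Proof.
move=> TX cT; have sub_X : {subset aleaves c <= X}.
  by move=> x /(subtree_leaves cT); rewrite (perm_mem TX).
have size_le : (size (aleaves c) <= (5 * m) ^ 2)%N.
  rewrite (leq_trans (subtree_size cT)) // (perm_size TX) size_Xseq.
  by rewrite expnS expn1 leq_pmull // muln_gt0 m_gt0.
have le_MB : (size (aleaves c))%:Z * B <= ((5 * m) ^ 2)%N%:Z * B.
  by rewrite ler_wpM2r ?B_ge0 ?lez_nat.
have := Etree_bound Eleaf_Xseq sub_X; have := B_ge0; move: le_MB B_small; lia.
Qed.

Lemma min_tree_neg_node T l r : min_addition_tree X T -> subtree (ANode l r) T ->
  aval l + aval r < 0 -> Ntree N (ANode l r) = 0 \/ Ntree N (ANode l r) = -1.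
Proof.
move=> T_min lrT lr_neg; have [TX _] := T_min.
case: (tight_Ntree (min_tree_tight T_min) lrT) => [[x //]|[Nm2|[Nm1|[N0|N2]]]].
- by case: (min_tree_Ntree_neq_m2 T_min lrT).
- by right.
- by left.
- have := aval_NE N H (ANode l r); have := Etree_subtree_lt TX lrT.
  by rewrite N2 /=; lia.
Qed.

Definition beta (i : nat) : rat :=
  if i == 0%N then h%:~R / H%:~R else (a i)%:~R / H%:~R - 1 / 3.

Lemma Eleaf_beta x : x \in X ->
  let f := (Eleaf N H x)%:~R / (3 * H%:~R) : rat in
  f = 0 \/ exists2 i, (i <= 3 * m)%N & f = beta i.
Proof.
have H_neq0 : H%:~R != 0 :> rat by rewrite intr_eq0 lt0r_neq0 // H_gt0.
rewrite /Eleaf; case/mem_Xseq => [[i i_in ->]|[->|->]] /=.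
- right; exists i; first lia.
  rewrite Nclass_a // /beta ifN; last lia.
  by rewrite intrB intrM mul1r; field.
- by left; rewrite Nclass_mH (_ : 3 * - H - -3 * H = 0) ?mul0r //; ring.
- right; exists 0%N => //.
  by rewrite Nclass_h /beta eqxx mul0r subr0 intrM; field.
Qed.

Definition lambda_sum (s : seq (bool * nat)) : rat :=
  \sum_(p <- s) (if p.1 then - beta p.2 else beta p.2).

Lemma Etree_lambda T c : perm_eq (aleaves T) X -> subtree c T ->
  exists s, [/\ (size s <= 5 * m)%N, all (fun p => p.2 <= 3 * m)%N s &
    (Etree N H c)%:~R / (3 * H%:~R) = lambda_sum s].
Proof.
move=> TX cT; have c_X x : x \in aleaves c -> x \in X.
  by move/(subtree_leaves cT); rewrite (perm_mem TX).
have [s [s_size s_idx s_sum]] := signed_sum_witness (fun x x_c => Eleaf_beta (c_X x x_c)).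
exists s; split=> //; last by rewrite /lambda_sum -s_sum /Etree rmorph_sum mulr_suml.
by rewrite (leq_trans s_size) // -size_Xseq -(perm_size TX) subtree_size.
Qed.

Lemma min_tree_neg_internal T z : min_addition_tree X T -> z \in ainternals T -> z < 0 ->
  exists s, [/\ (size s <= 5 * m)%N, all (fun p => p.2 <= 3 * m)%N s &
    z%:~R = lambda_sum s * H%:~R \/ z%:~R = (- (1 / 3) + lambda_sum s) * H%:~R].
Proof.
move=> T_min z_in z_neg; have [l [r [lrT z_lr]]] := mem_ainternals z_in.
have [s [s_size s_idx s_sum]] := Etree_lambda T_min.1 lrT.
exists s; split=> //.
rewrite -s_sum z_lr (third_decomp (lt0r_neq0 H_gt0) (aval_NE N H (ANode l r))).
rewrite z_lr in z_neg; case: (min_tree_neg_node T_min lrT z_neg) => ->; [left|right].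
- by rewrite mulr0z mul0r add0r.
- by rewrite mulrN1z mulNr.
Qed.

End MinTree.

Section Instance.
Variables (m K : nat) (b : nat -> nat).
Hypotheses (m_gt0 : (0 < m)%N) (K_gt0 : (0 < K)%N).
Hypothesis b_bounds : forall i, (1 <= i <= 3 * m)%N ->
  [/\ (0 < b i)%N, (K < 4 * b i)%N & (2 * b i < K)%N].

Local Notation M := ((5 * m) ^ 2)%N.
Local Notation W := (Wp m K).
Local Notation a := (ap m K b).
Local Notation h := (hp m K).
Local Notation H := (Hp m K).
Local Notation B := (3 * h + K%:Z).

Lemma M_ge25 : (25 <= M)%N.
Proof. by rewrite -[25%N]/(5 ^ 2)%N leq_exp2r // leq_pmulr. Qed.

Lemma hp_bounds : (3 * K)%:Z <= h <= (4 * K)%:Z.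
Proof.
have M_gt0 : (0 < 100 * M)%N by rewrite muln_gt0 (leq_trans _ M_ge25).
rewrite /hp; have -> : Lp m K = (300 * M * K + K)%N%:Z by rewrite /Lp /Wp; lia.
have -> : 4 * epsp m * ((300 * M * K + K)%N%:Z)%:~R =
          (300 * M * K + K)%N%:R / (100 * M)%N%:R :> rat.
  have -> : ((300 * M * K + K)%N%:Z)%:~R = (300 * M * K + K)%N%:R :> rat by [].
  rewrite /epsp natrD !natrM; field.
  by rewrite pnatr_eq0 -lt0n.
have M_gt0' : 0 < (100 * M)%N%:R :> rat by rewrite ltr0n.
apply/andP; split.
  by rewrite floor_ge_int ler_pdivlMr // -natrM ler_nat; lia.
rewrite -ltzD1 floor_lt_int ltr_pdivrMr // -PoszD -natrM ltr_nat.
have := M_ge25; nia.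
Qed.

Lemma Hp_gt_3W : 3 * W < H.
Proof. by have := hp_bounds; rewrite /Hp /Lp; lia. Qed.

Lemma ap_bounds i : (1 <= i <= 3 * m)%N ->
  [/\ h < a i, 0 < 3 * a i < H & `|3 * a i - H| <= B].
Proof.
move=> /b_bounds[_ b_gt b_lt]; have := hp_bounds.
have W_ge : (2500 * K)%:Z <= W by rewrite /Wp lez_nat leq_mul2r; have := M_ge25; lia.
rewrite /ap /Hp /Lp; move: W W_ge (b i) b_gt b_lt => w W_ge bi *; split; lia.
Qed.

Lemma Hp_large : 2 * (M%:Z * B) < H.
Proof.
have := hp_bounds; have := Hp_gt_3W; have := M_ge25.
rewrite /Wp PoszM; move: (M) (h) (H) => M' h' H' *; nia.
Qed.

Lemma hp_ge0 : 0 <= h.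
Proof. by have := hp_bounds; lia. Qed.

End Instance.

(* Stated apart: comparing [beta] with [betap] inside a larger goal makes
   unification unfold [hp], a floor over [rat], which is very slow. *)
Lemma lambda_sumE m K b s : lambda_sum (ap m K b) (hp m K) (Hp m K) s =
  \sum_(p <- s) (if p.1 then - betap m K b p.2 else betap m K b p.2).
Proof. by apply: eq_bigr => p _; rewrite /beta /betap. Qed.

Lemma is_lambda_sum m K b s : (size s <= 5 * m)%N -> all (fun p => p.2 <= 3 * m)%N s ->
  is_lambda m K b (lambda_sum (ap m K b) (hp m K) (Hp m K) s).
Proof.
by move=> s_size s_idx; exists s; split; [exact: s_size | exact: s_idx | exact: lambda_sumE].
Qed.

Theorem lemma2p9 (m K : nat) (b : nat -> nat) (T : atree) :
  (0 < m)%N -> (0 < K)%N ->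
  (forall i, (1 <= i <= 3 * m)%N ->
     [/\ (0 < b i)%N, (K < 4 * b i)%N & (2 * b i < K)%N]) ->
  (\sum_(1 <= i < (3 * m).+1) b i = m * K)%N ->
  min_addition_tree (Xp m K b) T ->
  forall z, z \in ainternals T -> z < 0 ->
    (exists l, is_lambda m K b l /\ z%:~R = l * (Hp m K)%:~R :> rat) \/
    (exists l, is_lambda m K b l /\ z%:~R = (- (1 / 3) + l) * (Hp m K)%:~R :> rat).
Proof.
move=> m_gt0 K_gt0 b_bd _ T_min z z_in z_neg.
have h_le : 3 * hp m K <= 3 * hp m K + K%:Z by rewrite lerDl.
have [s [s_size s_idx [z_eq|z_eq]]] :=
  min_tree_neg_internal m_gt0 (ap_bounds m_gt0 K_gt0 b_bd) (hp_ge0 m_gt0 K_gt0) h_le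
    (Hp_large m_gt0 K_gt0) T_min z_in z_neg; [left|right].
all: exists (lambda_sum (ap m K b) (hp m K) (Hp m K) s).
all: by split; [exact: is_lambda_sum | exact: z_eq].
Qed.
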